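(* For all $n\in\mathbb N$ the following hold in the $q$-shuffle algebra $\mathbb V$: $$G_n=q^{2n}D_n+q^2\sum_{\substack{i+j+k+1=n\\ i,j,k\ge0}}W_{-i}\star D_j\star W_{k+1},$$ $$G_n=q^{-2n}D_n+\sum_{\substack{i+j+k+1=n\\ i,j,k\ge0}}W_{k+1}\star D_j\star W_{-i}.$$
   Context: Let $\mathbb F$ be a field and let $q\in\mathbb F$ be nonzero and not a root of unity. Let $\mathbb V$ be the free associative $\mathbb F$-algebra on noncommuting $x,y$, with basis the words (including $1$). Juxtaposition denotes concatenation. Set $\langle x,x\rangle=\langle y,y\rangle=2$ and $\langle x,y\rangle=\langle y,x\rangle=-2$. The $q$-shuffle product $\star$ is the bilinear product determined as follows: - $1\star v=v\star 1=v$; - for nontrivial words $u=u_1\cdots u_r$ and $v=v_1\cdots v_s$, $$u\star v=u_1((u_2\cdots u_r)\star v)+v_1(u\star(v_2\cdots v_s))q^{\langle u_1,v_1\rangle+\cdots+\langle u_r,v_1\rangle}.$$ This makes $\mathbb V$ an associative algebra, the $q$-shuffle algebra. For $k\in\mathbb N$: - $W_{-k}=xyx\cdots x$ is the alternating word of length $2k+1$ beginning and ending with $x$; - $W_{k+1}=yxy\cdots y$ is the alternating word of length $2k+1$ beginning and ending with $y$; - $G_k=yxyx\cdots yx$ is the word of length $2k$; - $\tilde G_k=xyxy\cdots xy$ is the word of length $2k$; - $G_0=\tilde G_0=1$. Define $\{D_n\}_{n\in\mathbb N}\subseteq\mathbb V$ recursively by $D_0=1$ and, for $n\ge1$, $\sum_{i=0}^n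 D_i\star\tilde G_{n-i}=0$. *)

From mathcomp Require Import all_boot all_order all_algebra.
Set Implicit Arguments. Unset Strict Implicit. Unset Printing Implicit Defensive.
Import GRing.Theory Num.Theory.
Local Open Scope ring_scope.

Definition lx : bool := false.
Definition ly : bool := true.
Definition word := seq bool.

Section QShuffle.
Variables (F : fieldType) (q : F).

(* An element of the free algebra V is represented by a formal finite
   linear combination of words (a list of (coefficient, word) pairs);
   two representations denote the same element iff all coefficients agree. *)
Definition V := seq (F * word).

Definition coef (v : V) (w : word) : F :=
  \sum_(p <- v) (if p.2 == w then p.1 else 0).

Definition veq (u v : V) : Prop := forall w, coef u w = coef v w.

Definition vword (w : word) : V := [:: (1, w)].
Definition vadd (u v : V) : V := u ++ v.
Definition vscale (c : F) (v : V) : V := [seq (c * p.1, p.2) | p <- v].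
Definition vsum (I : Type) (s : seq I) (f : I -> V) : V := flatten (map f s).

Definition pair_form (a b : bool) : int := if a == b then 2%:Z else - (2%:Z).

Fixpoint shw (u : word) : word -> V :=
  match u with
  | [::] => fun v => [:: (1, v)]
  | a :: u' =>
      fix g (v : word) : V :=
        match v with
        | [::] => [:: (1, a :: u')]
        | b :: v' =>
            [seq (p.1, a :: p.2) | p <- shw u' (b :: v')] ++
            [seq (p.1 * q ^ (\sum_(c <- a :: u') pair_form c b), b :: p.2)
               | p <- g v']
        end
  end.

Definition star (u v : V) : V :=
  flatten [seq [seq (a.1 * b.1 * p.1, p.2) | p <- shw a.2 b.2] | a <- u, b <- v].

Definition alt (a : bool) (len : nat) : word := mkseq (fun i => addb a (odd i)) len.

Definition Wneg (k : nat) : V := vword (alt lx (2 * k).+1).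
Definition Wpos (k : nat) : V := vword (alt ly (2 * k).+1).   (* W_{k+1} *)
Definition Gw (k : nat) : V := vword (alt ly (2 * k)).
Definition Gtw (k : nat) : V := vword (alt lx (2 * k)).

(* D_0 = 1, D_n = - sum_{i<n} D_i * \tilde G_{n-i}  (equivalent to
   sum_{i=0}^n D_i * \tilde G_{n-i} = 0 since \tilde G_0 = 1). *)
Fixpoint Ds (n : nat) : seq V :=
  match n with
  | 0 => [:: vword [::]]
  | n'.+1 =>
      let s := Ds n' in
      rcons s (vscale (-1) (vsum (iota 0 n'.+1)
                              (fun i => star (nth [::] s i) (Gtw (n'.+1 - i)))))
  end.

Definition D (n : nat) : V := nth [::] (Ds n) n.

Definition triple_sum (n : nat) (f : nat -> nat -> nat -> V) : V :=
  vsum (iota 0 n.+1) (fun i => vsum (iota 0 n.+1) (fun j => vsum (iota 0 n.+1)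
    (fun k => if (i + j + k).+1 == n then f i j k else [::]))).

End QShuffle.

From HB Require Import structures.
From mathcomp Require Import all_boot all_order all_algebra.
From mathcomp Require Import boolp functions zify.
Set Implicit Arguments. Unset Strict Implicit. Unset Printing Implicit Defensive.
Import GRing.Theory.
Local Open Scope ring_scope.

(* Embed V into the algebra of all functions word -> F, where the q-shuffle
   product is the bilinear product determined by (X * Y)[::] = X[::] Y[::] and
     lder a (X * Y) = lder a X * Y + twist a X * lder a Y,
   lder a being the derivative by a first letter a and twist a the scaling
   of each word u by q^<u,a>.  Let G~(t), G(t), W-(t), W+(t), D(t) be the
   generating series of G~_n, G_n, W_{-n}, W_{n+1}, D_n; the recursion for D
   says D(t) G~(t) = 1.  Comparing constant terms and derivatives, by a
   simultaneous induction on words, gives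
     G~(q^2 t) W-(t) = W-(q^2 t) G~(t),
     G~(q^2 t) G(t) = 1 + q^2 t W-(q^2 t) W+(t).
   The first relation gives W-(t) D(t) = D(q^2 t) W-(q^2 t), so multiplying
   the second on the left by D(q^2 t) yields
     G(t) = D(q^2 t) + q^2 t W-(t) D(t) W+(t),
   whose coefficient of t^n is the first identity.  The same argument with
   q^-2, where the two relations need no induction, gives the second. *)

Lemma eqbN b : (b == ~~ b) = false. Proof. by case: b. Qed.
Lemma eqNb b : (~~ b == b) = false. Proof. by case: b. Qed.

Lemma sum_if_addn_eq (V : nmodType) N n k (F : nat -> V) : (n < N)%N ->
  \sum_(0 <= l < N) (if (l + k == n)%N then F l else 0) =
  if (k <= n)%N then F (n - k)%N else 0.
Proof.
move=> ltnN; rewrite (eq_bigr (fun l => if l == (n - k)%N then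
  (if (k <= n)%N then F l else 0) else 0)) => [|l _]; last first.
  by case: ifP => e1; case: ifP => e2 //; try case: ifP => e3 //; lia.
rewrite -(big_mkcond (pred1 (n - k)%N)) big_nat1_eq /=.
by case: leqP => [le_kn|//]; rewrite ifT //; lia.
Qed.

(** * Formal power series over an algebra *)

(* An alias, since on [nat -> R] the product provided by [functions] is the
   pointwise one; likewise for [qshuffle] below. *)
Definition pseries (R : Type) := nat -> R.

Section PowerSeries.
Variables (K : comNzRingType) (R : algType K).
Implicit Types (f g h : pseries R) (c : K).

HB.instance Definition _ := gen_eqMixin (pseries R).
HB.instance Definition _ := gen_choiceMixin (pseries R).
HB.instance Definition _ := GRing.Lmodule.copy (pseries R) (nat -> R).

Definition pseries_one : pseries R := fun n => (n == 0)%:R.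
Definition pseries_mul f g : pseries R :=
  fun n => \sum_(0 <= i < n.+1) f i * g (n - i)%N.

Lemma pseries_mul_box f g N n : (n < N)%N -> pseries_mul f g n =
  \sum_(0 <= i < N) \sum_(0 <= j < N) (if (i + j == n)%N then f i * g j else 0).
Proof.
move=> ltnN; rewrite /pseries_mul (big_nat_widen _ _ _ _ _ ltnN) big_mkcond.
apply: eq_bigr => i _; rewrite (eq_bigr (fun j => if (j + i == n)%N then f i * g j else 0)).
  by rewrite sum_if_addn_eq.
by move=> j _; rewrite addnC.
Qed.

Lemma pseries_mul3l_box f g h N n : (n < N)%N ->
  pseries_mul (pseries_mul f g) h n =
  \sum_(0 <= i < N) \sum_(0 <= j < N) \sum_(0 <= k < N)
    (if (i + j + k == n)%N then f i * g j * h k else 0).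
Proof.
move=> ltnN; rewrite (pseries_mul_box _ _ ltnN) exchange_big /=.
rewrite [RHS](eq_bigr (fun i => \sum_(0 <= k < N) \sum_(0 <= j < N)
  (if (i + j + k == n)%N then f i * g j * h k else 0))) => [|i _]; last first.
  exact: exchange_big.
rewrite [RHS]exchange_big /=; apply: eq_bigr => k _.
rewrite sum_if_addn_eq //; case: leqP => le_kn.
  rewrite (pseries_mul_box _ _ (leq_ltn_trans (leq_subr k n) ltnN)) mulr_suml.
  apply: eq_bigr => i _; rewrite mulr_suml; apply: eq_bigr => j _.
  have -> : (i + j + k == n)%N = (i + j == n - k)%N by lia.
  by case: ifP; rewrite ?mul0r.
by symmetry; apply: big1 => i _; apply: big1 => j _; rewrite ifF //; lia.
Qed.

Lemma pseries_mul3r_box f g h N n : (n < N)%N ->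
  pseries_mul f (pseries_mul g h) n =
  \sum_(0 <= i < N) \sum_(0 <= j < N) \sum_(0 <= k < N)
    (if (i + j + k == n)%N then f i * g j * h k else 0).
Proof.
move=> ltnN; rewrite (pseries_mul_box _ _ ltnN); apply: eq_bigr => i _.
rewrite (eq_bigr (fun m => if (m + i == n)%N then f i * pseries_mul g h m else 0)).
  rewrite sum_if_addn_eq //; case: leqP => le_in.
    rewrite (pseries_mul_box _ _ (leq_ltn_trans (leq_subr i n) ltnN)) mulr_sumr.
    apply: eq_bigr => j _; rewrite mulr_sumr; apply: eq_bigr => k _.
    have -> : (i + j + k == n)%N = (j + k == n - i)%N by lia.
    by case: ifP; rewrite ?mulr0 ?mulrA.
  by symmetry; apply: big1 => j _; apply: big1 => k _; rewrite ifF //; lia.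
by move=> m _; rewrite addnC.
Qed.

Lemma pseries_mulA : associative pseries_mul.
Proof.
move=> f g h; apply: funext => n.
by rewrite (pseries_mul3r_box _ _ _ (ltnSn n)) (pseries_mul3l_box _ _ _ (ltnSn n)).
Qed.

Lemma pseries_mul1l : left_id pseries_one pseries_mul.
Proof.
move=> f; apply: funext => n; rewrite /pseries_mul big_ltn // big1_seq => [|i].
  by rewrite mul1r subn0 addr0.
by rewrite mem_index_iota; case: i => // i _; rewrite /pseries_one mul0r.
Qed.

Lemma pseries_mul1r : right_id pseries_one pseries_mul.
Proof.
move=> f; apply: funext => n; rewrite /pseries_mul big_nat_recr //= subnn mulr1.
rewrite big1_seq ?add0r // => i; rewrite mem_index_iota /pseries_one => lt_in.
have -> : (n - i == 0)%N = false by lia.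
by rewrite mulr0.
Qed.

Lemma pseries_mulDl : left_distributive pseries_mul +%R.
Proof.
move=> f g h; apply: funext => n.
transitivity (pseries_mul f h n + pseries_mul g h n) => //.
by rewrite /pseries_mul -big_split; apply: eq_bigr => i _; apply: mulrDl.
Qed.

Lemma pseries_mulDr : right_distributive pseries_mul +%R.
Proof.
move=> f g h; apply: funext => n.
transitivity (pseries_mul f g n + pseries_mul f h n) => //.
by rewrite /pseries_mul -big_split; apply: eq_bigr => i _; apply: mulrDr.
Qed.

HB.instance Definition _ := GRing.Zmodule_isPzRing.Build (pseries R)
  pseries_mulA pseries_mul1l pseries_mul1r pseries_mulDl pseries_mulDr.

Lemma pseries_one_neq0 : (1 : pseries R) != 0.
Proof. by apply/eqP => /(congr1 (fun f : pseries R => f 0%N)) /eqP; rewrite oner_eq0. Qed.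

HB.instance Definition _ := GRing.PzSemiRing_isNonZero.Build (pseries R) pseries_one_neq0.

Lemma pseries_scalerAl c f g : c *: (f * g) = (c *: f) * g.
Proof.
apply: funext => n; transitivity (c *: pseries_mul f g n) => //.
by rewrite /pseries_mul scaler_sumr; apply: eq_bigr => i _; apply: scalerAl.
Qed.

HB.instance Definition _ := GRing.Lmodule_isLalgebra.Build K (pseries R) pseries_scalerAl.

Lemma pseries_scalerAr c f g : c *: (f * g) = f * (c *: g).
Proof.
apply: funext => n; transitivity (c *: pseries_mul f g n) => //.
by rewrite /pseries_mul scaler_sumr; apply: eq_bigr => i _; apply: scalerAr.
Qed.

HB.instance Definition _ := GRing.Lalgebra_isAlgebra.Build K (pseries R) pseries_scalerAr.

Lemma pseriesDE f g n : (f + g) n = f n + g n. Proof. by []. Qed.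

Lemma pseriesZE c f n : (c *: f) n = c *: f n. Proof. by []. Qed.

Lemma pseries1E n : (1 : pseries R) n = (n == 0)%:R. Proof. by []. Qed.

Lemma coef_mul f g n : (f * g) n = \sum_(0 <= i < n.+1) f i * g (n - i)%N.
Proof. by []. Qed.

Definition tX : pseries R := fun n => (n == 1)%:R.

Lemma coef_tXM f n : (tX * f) n = if n is m.+1 then f m else 0.
Proof.
rewrite coef_mul; case: n => [|n]; first by rewrite big_nat1 mul0r.
rewrite big_ltn // big_ltn // big1_seq => [|i /andP[_]].
  by rewrite /tX mul0r mul1r subn1 addr0 add0r.
by rewrite mem_index_iota /tX; case: i => [|[|i]] // _; rewrite mul0r.
Qed.

Lemma coef_mulX f n : (f * tX) n = if n is m.+1 then f m else 0.
Proof.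
rewrite coef_mul; case: n => [|n]; first by rewrite big_nat1 mulr0.
rewrite big_nat_recr //= big_nat_recr //= subnn subSnn mulr0 mulr1 addr0.
rewrite big1_seq ?add0r // => i; rewrite mem_index_iota /tX => lt_in.
have -> : (n.+1 - i == 1)%N = false by lia.
by rewrite mulr0.
Qed.

Lemma commr_tX f : GRing.comm tX f.
Proof. by apply: funext => n; rewrite coef_tXM coef_mulX. Qed.

Lemma mulrXCA f g : f * (tX * g) = tX * (f * g).
Proof. by rewrite mulrA -commr_tX mulrA. Qed.

Definition rescale c f : pseries R := fun n => c ^+ n *: f n.
Arguments rescale : simpl never.

Lemma rescaleM c f g : rescale c (f * g) = rescale c f * rescale c g.
Proof.
apply: funext => n; rewrite /rescale !coef_mul scaler_sumr.
apply: eq_big_nat => i /andP[_ lt_in].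
by rewrite -scalerAl -scalerAr scalerA -exprD subnKC // -ltnS.
Qed.

Lemma rescale1 c : rescale c 1 = 1.
Proof. by apply: funext => -[|n]; rewrite /rescale ?expr0 ?scale1r ?scaler0. Qed.

Lemma rescale_is_linear c : linear (rescale c).
Proof.
move=> a f g; apply: funext => n.
change (c ^+ n *: (a *: f n + g n) = a *: (c ^+ n *: f n) + c ^+ n *: g n).
by rewrite scalerDr !scalerA mulrC.
Qed.

HB.instance Definition _ c :=
  GRing.isLinear.Build K (pseries R) (pseries R) _ (rescale c) (rescale_is_linear c).

Lemma rescaleZ c a f : rescale c (a *: f) = a *: rescale c f.
Proof. exact: linearZ. Qed.

Lemma rescaleX c : rescale c tX = c *: tX.
Proof.
apply: funext => n; rewrite /rescale pseriesZE /tX.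
by case: n => [|[|n]]; rewrite ?expr1 // !scaler0.
Qed.

Lemma pseries_mul1C f g : g 0%N = 1 -> f * g = 1 -> g * f = 1.
Proof.
move=> g0 fg; suff gfK : GRing.rreg g.
  by apply: gfK; rewrite mul1r -mulrA fg mulr1.
move=> h1 h2 eq12; apply: funext => n; elim/ltn_ind: n => n IH.
have := congr1 (fun h => h n) eq12; rewrite /= !coef_mul !big_nat_recr //= subnn g0 !mulr1.
rewrite (@eq_big_nat _ _ _ 0 n (fun i => h1 i * g (n - i)%N) (fun i => h2 i * g (n - i)%N)).
  by move/addrI.
by move=> i /andP[_ lt_in]; rewrite IH.
Qed.

Lemma rescaleE c f n : rescale c f n = c ^+ n *: f n. Proof. by []. Qed.

Lemma coef_tX_mul3 f g h n : (tX * (f * g * h)) n =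
  \sum_(0 <= i < n.+1) \sum_(0 <= j < n.+1) \sum_(0 <= k < n.+1)
    (if (i + j + k).+1 == n then f i * g j * h k else 0).
Proof.
rewrite coef_tXM; case: n => [|n].
  by symmetry; apply: big1 => i _; apply: big1 => j _; apply: big1.
exact: (pseries_mul3l_box f g h (leqW (ltnSn n))).
Qed.

Section InversePair.
Variables (B D : pseries R).
Hypotheses (B0 : B 0%N = 1) (DB : D * B = 1).

Lemma rescale_conj c X : rescale c B * X = rescale c X * B ->
  X * D = rescale c D * rescale c X.
Proof.
move=> BX; have BD : B * D = 1 := pseries_mul1C B0 DB.
rewrite -[X * D]mul1r -(rescale1 c) -DB rescaleM -mulrA [rescale c B * _]mulrA BX.
by rewrite -mulrA BD mulr1.
Qed.

Lemma pseries_decomposition c d A X Y :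
  rescale c B * A = 1 + d *: (tX * (rescale c X * Y)) ->
  rescale c B * X = rescale c X * B ->
  A = rescale c D + d *: (tX * (X * D * Y)).
Proof.
move=> BA BX; rewrite -[A]mul1r -(rescale1 c) -DB rescaleM -mulrA BA mulrDr mulr1.
by rewrite -scalerAr mulrXCA [rescale c D * _]mulrA -(rescale_conj BX).
Qed.
End InversePair.
End PowerSeries.
Arguments tX {K R}.

Section MapPseries.
Variables (K : comNzRingType) (R S : algType K).
Implicit Types (f g : pseries R) (c : K).

Definition map_pseries (phi : R -> S) f : pseries S := fun n => phi (f n).
Arguments map_pseries : simpl never.

Lemma map_pseriesD (phi : {additive R -> S}) f g :
  map_pseries phi (f + g) = map_pseries phi f + map_pseries phi g.
Proof. by apply: funext => n; rewrite /map_pseries /= raddfD. Qed.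

Lemma map_pseriesZ (phi : {linear R -> S}) c f :
  map_pseries phi (c *: f) = c *: map_pseries phi f.
Proof. by apply: funext => n; rewrite /map_pseries /= linearZ. Qed.

Lemma map_pseriesX (phi : {additive R -> S}) f :
  map_pseries phi (tX * f) = tX * map_pseries phi f.
Proof.
by apply: funext => n; rewrite /map_pseries !coef_tXM; case: n => [|n]; rewrite ?raddf0.
Qed.

Lemma map_pseriesM (phi : {rmorphism R -> S}) f g :
  map_pseries phi (f * g) = map_pseries phi f * map_pseries phi g.
Proof.
apply: funext => n; rewrite /map_pseries !coef_mul rmorph_sum.
by apply: eq_bigr => i _; rewrite rmorphM.
Qed.

Lemma map_pseries1 (phi : {rmorphism R -> S}) : map_pseries phi 1 = 1.
Proof. by apply: funext => n; rewrite /map_pseries rmorph_nat. Qed.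

Lemma map_pseries_rescale (phi : {linear R -> S}) c f :
  map_pseries phi (rescale c f) = rescale c (map_pseries phi f).
Proof. by apply: funext => n; rewrite /map_pseries /rescale linearZ. Qed.
End MapPseries.

(** * The completed q-shuffle algebra *)

Section QShuffleAlgebra.
Variables (F : fieldType) (q : F).
Hypothesis q_neq0 : q != 0.

Definition qshuffle := word -> F^o.
HB.instance Definition _ := gen_eqMixin qshuffle.
HB.instance Definition _ := gen_choiceMixin qshuffle.
HB.instance Definition _ := GRing.Lmodule.copy qshuffle (word -> F^o).

Implicit Types (X Y Z : qshuffle) (a b : bool) (s w : word).

Lemma qshuffleZE c X w : (c *: X) w = c * X w. Proof. by []. Qed.

Definition weight w b : int := \sum_(c <- w) pair_form c b.

Lemma weight_cons c w b : weight (c :: w) b = pair_form c b + weight w b.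
Proof. by rewrite /weight big_cons. Qed.

Definition lder a X : qshuffle := fun w => X (a :: w).
Definition twist a X : qshuffle := fun w => q ^ weight w a * X w.

Lemma lder_is_linear a : linear (lder a). Proof. by []. Qed.
HB.instance Definition _ a :=
  GRing.isLinear.Build F qshuffle qshuffle _ (lder a) (lder_is_linear a).

Lemma twist_is_linear a : linear (twist a).
Proof. by move=> c X Y; apply: funext => w; rewrite /twist /= mulrDr mulrCA. Qed.
HB.instance Definition _ a :=
  GRing.isLinear.Build F qshuffle qshuffle _ (twist a) (twist_is_linear a).

Lemma lder_twist a b X : lder b (twist a X) = q ^ pair_form b a *: twist a (lder b X).
Proof. by apply: funext => w; rewrite /lder /twist /= weight_cons expfzDr // -mulrA. Qed.

Lemma twistC a b X : twist a (twist b X) = twist b (twist a X).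
Proof. by apply: funext => w; rewrite /twist mulrCA. Qed.

(* The coefficient of [w] in [X * Y], by the derivative rule of the header;
   on words this rule is the recursion defining [shw] (see [embed_shw]). *)
Fixpoint qmul_at w X Y : F :=
  if w is a :: w' then qmul_at w' (lder a X) Y + qmul_at w' (twist a X) (lder a Y)
  else X [::] * Y [::].

Lemma qmul_atDl w X X' Y : qmul_at w (X + X') Y = qmul_at w X Y + qmul_at w X' Y.
Proof.
elim: w X X' Y => [|a w IH] X X' Y /=; first exact: mulrDl.
by rewrite !linearD !IH addrACA.
Qed.

Lemma qmul_atDr w X Y Y' : qmul_at w X (Y + Y') = qmul_at w X Y + qmul_at w X Y'.
Proof.
elim: w X Y Y' => [|a w IH] X Y Y' /=; first exact: mulrDr.
by rewrite linearD !IH addrACA.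
Qed.

Lemma qmul_atZl w c X Y : qmul_at w (c *: X) Y = c * qmul_at w X Y.
Proof.
elim: w X Y => [|a w IH] X Y /=; first exact: esym (mulrA _ _ _).
by rewrite !linearZ !IH mulrDr.
Qed.

Lemma qmul_atZr w c X Y : qmul_at w X (c *: Y) = c * qmul_at w X Y.
Proof.
elim: w X Y => [|a w IH] X Y /=; first exact: mulrCA _ _ _.
by rewrite linearZ !IH mulrDr.
Qed.

Lemma qmul_at0l w Y : qmul_at w 0 Y = 0.
Proof. by rewrite -(scale0r 0) qmul_atZl mul0r. Qed.

Lemma qmul_at0r w X : qmul_at w X 0 = 0.
Proof. by rewrite -(scale0r 0) qmul_atZr mul0r. Qed.

Lemma qmul_at_twist w a X Y :
  qmul_at w (twist a X) (twist a Y) = q ^ weight w a * qmul_at w X Y.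
Proof.
elim: w X Y => [|b w IH] X Y /=; first by rewrite /twist /weight big_nil expr0z !mul1r.
rewrite !lder_twist twistC qmul_atZl qmul_atZr !IH weight_cons expfzDr //.
by rewrite -!mulrDr mulrA.
Qed.

Definition delta s : qshuffle := fun w => (w == s)%:R.
Definition qmul X Y : qshuffle := fun w => qmul_at w X Y.

Lemma lder_delta a s : lder a (delta s) =
  if s is b :: s' then (if b == a then delta s' else 0) else 0.
Proof.
case: s => [|b s]; apply: funext => w; rewrite /lder /delta //.
by rewrite eqseq_cons eq_sym; case: eqP.
Qed.

Lemma twist_delta a s : twist a (delta s) = q ^ weight s a *: delta s.
Proof.
apply: funext => w; rewrite /twist qshuffleZE /delta.
by case: eqP => [->|_]; rewrite ?mulr0.
Qed.

Lemma lder_delta_nil a : lder a (delta [::]) = 0.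
Proof. exact: lder_delta. Qed.

Lemma twist_delta_nil a : twist a (delta [::]) = delta [::].
Proof. by rewrite twist_delta /weight big_nil expr0z scale1r. Qed.

Lemma qmul_at1l w Y : qmul_at w (delta [::]) Y = Y w.
Proof.
elim: w Y => [|a w IH] Y /=; first exact: mul1r.
by rewrite lder_delta_nil qmul_at0l twist_delta_nil IH add0r.
Qed.

Lemma qmul_at1r w X : qmul_at w X (delta [::]) = X w.
Proof.
elim: w X => [|a w IH] X /=; first exact: mulr1.
by rewrite lder_delta_nil qmul_at0r IH addr0.
Qed.

Lemma lder_qmul a X Y : lder a (qmul X Y) = qmul (lder a X) Y + qmul (twist a X) (lder a Y).
Proof. by []. Qed.

Lemma twist_qmul a X Y : twist a (qmul X Y) = qmul (twist a X) (twist a Y).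
Proof. by apply: funext => w; rewrite /twist /qmul qmul_at_twist. Qed.

Lemma qmulA : associative qmul.
Proof.
move=> X Y Z; apply: funext => w; rewrite /qmul.
elim: w X Y Z => [|a w IH] X Y Z /=; first exact: mulrA.
rewrite -/(qmul X Y) -/(qmul Y Z) lder_qmul twist_qmul lder_qmul.
by rewrite !qmul_atDl qmul_atDr -!/(qmul _ _) !IH addrA.
Qed.

Lemma qmul1l : left_id (delta [::]) qmul.
Proof. by move=> X; apply: funext => w; rewrite /qmul qmul_at1l. Qed.

Lemma qmul1r : right_id (delta [::]) qmul.
Proof. by move=> X; apply: funext => w; rewrite /qmul qmul_at1r. Qed.

Lemma qmulDl : left_distributive qmul +%R.
Proof. by move=> X Y Z; apply: funext => w; rewrite /qmul qmul_atDl. Qed.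

Lemma qmulDr : right_distributive qmul +%R.
Proof. by move=> X Y Z; apply: funext => w; rewrite /qmul qmul_atDr. Qed.

HB.instance Definition _ :=
  GRing.Zmodule_isPzRing.Build qshuffle qmulA qmul1l qmul1r qmulDl qmulDr.

Lemma qshuffle_one_neq0 : (1 : qshuffle) != 0.
Proof. by apply/eqP => /(congr1 (fun X : qshuffle => X [::])) /eqP; rewrite oner_eq0. Qed.

HB.instance Definition _ := GRing.PzSemiRing_isNonZero.Build qshuffle qshuffle_one_neq0.

Lemma qshuffle_scalerAl c X Y : c *: (X * Y) = (c *: X) * Y.
Proof. by apply: funext => w; rewrite qshuffleZE /GRing.mul /= /qmul qmul_atZl. Qed.

HB.instance Definition _ := GRing.Lmodule_isLalgebra.Build F qshuffle qshuffle_scalerAl.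

Lemma qshuffle_scalerAr c X Y : c *: (X * Y) = X * (c *: Y).
Proof. by apply: funext => w; rewrite qshuffleZE /GRing.mul /= /qmul qmul_atZr. Qed.

HB.instance Definition _ := GRing.Lalgebra_isAlgebra.Build F qshuffle qshuffle_scalerAr.

Lemma lderM a X Y : lder a (X * Y) = lder a X * Y + twist a X * lder a Y.
Proof. by []. Qed.

Definition const_coef X : F^o := X [::].

Lemma const_coef_is_linear : linear const_coef. Proof. by []. Qed.
HB.instance Definition _ :=
  GRing.isLinear.Build F qshuffle F^o _ const_coef const_coef_is_linear.

Lemma const_coef_is_monoid_morphism : monoid_morphism const_coef. Proof. by []. Qed.
HB.instance Definition _ := GRing.isMonoidMorphism.Build qshuffle F^o const_coef
  const_coef_is_monoid_morphism.

Lemma qshuffle_ext X Y :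
  X [::] = Y [::] -> (forall a, lder a X = lder a Y) -> X = Y.
Proof.
move=> eq0 eqd; apply: funext => -[|a w] //.
by have /(congr1 (fun Z : qshuffle => Z w)) := eqd a.
Qed.

Definition embed (u : V F) : qshuffle := fun w => coef u w.

Lemma veq_embed u v : embed u = embed v -> veq u v.
Proof. by move=> euv w; have /(congr1 (fun X : qshuffle => X w)) := euv. Qed.

Lemma embedE u : embed u = \sum_(p <- u) p.1 *: delta p.2.
Proof.
apply: funext => w; rewrite fct_sumE /embed /coef; apply: eq_bigr => p _.
by rewrite qshuffleZE /delta eq_sym; case: eqP; rewrite ?mulr1 ?mulr0.
Qed.

Lemma embed_word s : embed (vword F s) = delta s.
Proof. by rewrite embedE big_seq1 scale1r. Qed.

Lemma embed_add u v : embed (vadd u v) = embed u + embed v.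
Proof. by rewrite !embedE big_cat. Qed.

Lemma embed_scale c u : embed (vscale c u) = c *: embed u.
Proof. by rewrite !embedE big_map scaler_sumr; apply: eq_bigr => p _; rewrite scalerA. Qed.

Lemma embed_flatten (us : seq (V F)) : embed (flatten us) = \sum_(u <- us) embed u.
Proof. by rewrite embedE big_flatten; apply: eq_bigr => u _; rewrite embedE. Qed.

Lemma embed_sum I (r : seq I) (f : I -> V F) : embed (vsum r f) = \sum_(i <- r) embed (f i).
Proof. by rewrite embed_flatten big_map. Qed.

Lemma embed_nil : embed [::] = 0.
Proof. by rewrite embedE big_nil. Qed.

Lemma embed_mulZ c u : embed [seq (c * p.1, p.2) | p <- u] = c *: embed u.
Proof. by rewrite -embed_scale. Qed.

Definition prefix a X : qshuffle :=
  fun w => if w is b :: w' then (if b == a then X w' else 0) else 0.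

Lemma embed_prefix a u : embed [seq (p.1, a :: p.2) | p <- u] = prefix a (embed u).
Proof.
rewrite !embedE big_map; apply: funext => -[|b w]; rewrite !fct_sumE.
  by apply: big1 => p _; rewrite qshuffleZE mulr0.
rewrite /prefix; case: eqP => [->|ne].
  by apply: eq_bigr => p _; rewrite !qshuffleZE /delta eqseq_cons eqxx.
by apply: big1 => p _; rewrite qshuffleZE /delta eqseq_cons (introF eqP ne) mulr0.
Qed.

Lemma embed_prefixZ a c u :
  embed [seq (p.1 * c, a :: p.2) | p <- u] = c *: prefix a (embed u).
Proof.
rewrite -embed_prefix -embed_mulZ -map_comp; congr embed; apply: eq_map => p /=.
by rewrite mulrC.
Qed.

Lemma lder_prefix a b X : lder b (prefix a X) = if a == b then X else 0.
Proof. by apply: funext => w; rewrite /lder /prefix eq_sym; case: eqP. Qed.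

Lemma shw_cons a s b t : shw q (a :: s) (b :: t) =
  [seq (p.1, a :: p.2) | p <- shw q s (b :: t)] ++
  [seq (p.1 * q ^ weight (a :: s) b, b :: p.2) | p <- shw q (a :: s) t].
Proof. by []. Qed.

Lemma embed_shw s t : embed (shw q s t) = delta s * delta t.
Proof.
elim: s t => [|a s IHs] t; first by rewrite embedE big_seq1 scale1r mul1r.
elim: t => [|b t IHt]; first by rewrite /= embedE big_seq1 scale1r mulr1.
rewrite shw_cons embed_add embed_prefix embed_prefixZ IHs IHt.
apply: qshuffle_ext => [|c].
  by rewrite -[LHS]/(0 + _ * 0 : F) -[RHS]/(0 * 0 : F) mulr0 mul0r addr0.
rewrite linearD linearZ /= !lder_prefix lderM !lder_delta twist_delta -scalerAl.
by case: eqP => [<-|_]; case: eqP => [<-|_]; rewrite ?mul0r ?mulr0 ?scaler0 ?add0r ?addr0.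
Qed.

Lemma embed_star u v : embed (star q u v) = embed u * embed v.
Proof.
rewrite /star embed_flatten big_allpairs_dep (embedE u) (embedE v) mulr_suml.
apply: eq_bigr => a _; rewrite mulr_sumr; apply: eq_bigr => b _.
by rewrite embed_mulZ embed_shw -scalerAl -scalerAr scalerA.
Qed.

Local Notation dser a := (map_pseries (lder a)).
Local Notation tser a := (map_pseries (twist a)).

Definition at_word w (f : pseries qshuffle) : pseries F^o := fun n => f n w.
Arguments at_word : simpl never.

Lemma at_wordD w f g : at_word w (f + g) = at_word w f + at_word w g. Proof. by []. Qed.
Lemma at_wordZ w c f : at_word w (c *: f) = c *: at_word w f. Proof. by []. Qed.

Lemma at_wordX w f : at_word w (tX * f) = tX * at_word w f.
Proof. by apply: funext => n; rewrite /at_word !coef_tXM; case: n. Qed.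

Lemma at_word_cons a w f : at_word (a :: w) f = at_word w (dser a f).
Proof. by []. Qed.

Lemma at_word_nil f : at_word [::] f = map_pseries const_coef f.
Proof. by []. Qed.

Lemma at_word_inj f g : (forall w, at_word w f = at_word w g) -> f = g.
Proof.
move=> efg; apply: funext => n; apply: funext => w.
by have /(congr1 (fun h => h n)) := efg w.
Qed.

Lemma dserM a f g : dser a (f * g) = dser a f * g + tser a f * dser a g.
Proof.
apply: funext => n; rewrite pseriesDE /map_pseries !coef_mul linear_sum -big_split.
by apply: eq_bigr.
Qed.

Lemma dser1 a : dser a 1 = 0.
Proof.
by apply: funext => -[|n].
Qed.

Lemma alt_cons b n : alt b n.+1 = b :: alt (~~ b) n.
Proof.
rewrite /alt /mkseq -add1n iotaD /= addbF; congr (_ :: _).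
by rewrite (iotaDl 1 0) -map_comp; apply: eq_map => i /=; rewrite add0n addbN addNb.
Qed.

Lemma weight_alt_even b i a : weight (alt b (2 * i)) a = 0.
Proof.
elim: i b => [|i IH] b; first by rewrite /weight muln0 big_nil.
by rewrite mulnS !alt_cons !weight_cons negbK IH addr0; clear IH; case: a; case: b.
Qed.

Lemma weight_alt_odd b i a : weight (alt b (2 * i).+1) a = pair_form b a.
Proof. by rewrite alt_cons weight_cons weight_alt_even addr0. Qed.

(** * Generating series of alternating words *)

(* [Gser lx], [Gser ly], [Wser lx], [Wser ly] are the generating series of
   G~_n, G_n, W_{-n} and W_{n+1}. *)
Definition Gser b : pseries qshuffle := fun n => delta (alt b (2 * n)).
Definition Wser b : pseries qshuffle := fun n => delta (alt b (2 * n).+1).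

Lemma Gser0 b : Gser b 0%N = 1. Proof. by []. Qed.

Lemma Gser_lder a b : dser a (Gser b) = if b == a then tX * Wser (~~ b) else 0.
Proof.
apply: funext => n; rewrite /map_pseries /Gser; case: eqP => [<-|ne].
  rewrite coef_tXM; case: n => [|n]; first exact: lder_delta_nil.
  by rewrite mulnS alt_cons lder_delta eqxx.
case: n => [|n]; first exact: lder_delta_nil.
by rewrite mulnS alt_cons lder_delta (introF eqP ne).
Qed.

Lemma Wser_lder a b : dser a (Wser b) = if b == a then Gser (~~ b) else 0.
Proof.
by apply: funext => n; rewrite /map_pseries /Wser alt_cons lder_delta; case: ifP.
Qed.

Lemma Gser_twist a b : tser a (Gser b) = Gser b.
Proof.
apply: funext => n.
by rewrite /map_pseries /Gser twist_delta weight_alt_even expr0z scale1r.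
Qed.

Lemma Wser_twist a b :
  tser a (Wser b) = (if b == a then q ^+ 2 else q ^- 2) *: Wser b.
Proof.
apply: funext => n; rewrite /map_pseries /Wser twist_delta weight_alt_odd.
by rewrite /pair_form; case: ifP.
Qed.

Lemma Gser_const b : map_pseries const_coef (Gser b) = 1.
Proof. by apply: funext => -[|n]; rewrite /map_pseries /Gser ?mulnS. Qed.

Lemma Wser_const b : map_pseries const_coef (Wser b) = 0.
Proof. by apply: funext => n; rewrite /map_pseries /Wser alt_cons. Qed.

Let derE := (map_pseriesX, dserM, dser1, Gser_lder, Wser_lder, Gser_twist, Wser_twist,
  map_pseries_rescale, map_pseriesD, map_pseriesZ, eqxx, eqbN, eqNb, negbK).

Let normE := (rescaleM, rescaleX, rescaleZ, raddf0, mul0r, mulr0, add0r, addr0, scaler0).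

Let constE := (at_word_nil, map_pseriesD, map_pseriesZ, map_pseriesX, map_pseriesM,
  map_pseries1, map_pseries_rescale, Gser_const, Wser_const, rescale1, raddf0,
  mulr0, mulr1, mul1r, scaler0, addr0).

(* Differentiating a relation at [a :: w] by [a] yields a combination of the
   relations at [w], which are then available by induction. *)
Lemma Gser_Wser_q2_relations w b :
  at_word w (rescale (q ^+ 2) (Gser b) * Wser b) =
    at_word w (rescale (q ^+ 2) (Wser b) * Gser b) /\
  at_word w (rescale (q ^+ 2) (Gser b) * Gser (~~ b)) =
    at_word w (1 + q ^+ 2 *: (tX * (rescale (q ^+ 2) (Wser b) * Wser (~~ b)))).
Proof.
elim: w b => [|a w IH] b; first by rewrite !constE.
rewrite !at_word_cons; have [->|->] : a = b \/ a = ~~ b by case: a; case: b; auto.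
all: have [GW_b GG_b] := IH b; have [GW_nb GG_nb] := IH (~~ b).
all: rewrite negbK in GW_nb GG_nb.
  rewrite !derE !normE -!scalerAl -!mulrA !mulrXCA !at_wordD !at_wordZ !at_wordX.
  rewrite GG_b GG_nb GW_nb !at_wordD !at_wordZ !at_wordX.
  by rewrite addrCA addrA.
rewrite !derE !normE -!scalerAl !mulrXCA -scalerAr scalerA mulfV ?expf_neq0 //.
by rewrite scale1r !at_wordX GW_b.
Qed.

Lemma Gser_Wser_commV b :
  rescale (q ^- 2) (Gser b) * Wser (~~ b) = rescale (q ^- 2) (Wser (~~ b)) * Gser b.
Proof.
apply: at_word_inj => -[|a w]; first by rewrite !constE.
rewrite !at_word_cons; congr (at_word w _).
have [->|->] : a = b \/ a = ~~ b by case: a; case: b; auto.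
  by rewrite !derE !normE -!scalerAl -!mulrA !mulrXCA.
by rewrite !derE !normE.
Qed.

Lemma Gser_GserV b : rescale (q ^- 2) (Gser b) * Gser (~~ b) =
  1 + tX * (rescale (q ^- 2) (Wser (~~ b)) * Wser b).
Proof.
apply: at_word_inj => -[|a w]; first by rewrite !constE.
rewrite !at_word_cons; congr (at_word w _).
have [->|->] : a = b \/ a = ~~ b by case: a; case: b; auto.
  by rewrite !derE !normE -!scalerAl -!mulrA -scalerAr.
by rewrite !derE !normE mulrXCA.
Qed.

Lemma Gser_Wser_comm b :
  rescale (q ^+ 2) (Gser b) * Wser b = rescale (q ^+ 2) (Wser b) * Gser b.
Proof. by apply: at_word_inj => w; case: (Gser_Wser_q2_relations w b). Qed.

Lemma Gser_Gser b : rescale (q ^+ 2) (Gser b) * Gser (~~ b) =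
  1 + q ^+ 2 *: (tX * (rescale (q ^+ 2) (Wser b) * Wser (~~ b))).
Proof. by apply: at_word_inj => w; case: (Gser_Wser_q2_relations w b). Qed.

Lemma size_Ds n : size (Ds q n) = n.+1.
Proof. by elim: n => [|n IH] //=; rewrite size_rcons IH. Qed.

Lemma nth_Ds n i : (i <= n)%N -> nth [::] (Ds q n) i = D q i.
Proof.
elim: n => [|n IH]; first by rewrite leqn0 => /eqP ->.
rewrite leq_eqVlt => /orP[/eqP -> //|lt_in].
by rewrite /= nth_rcons size_Ds lt_in IH.
Qed.

Lemma D_succ n : D q n.+1 =
  vscale (-1) (vsum (iota 0 n.+1) (fun i => star q (D q i) (Gtw F (n.+1 - i)))).
Proof.
rewrite {1}/D [Ds _ n.+1]/= nth_rcons size_Ds ltnn eqxx /vsum; congr (vscale _ (flatten _)).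
apply/eq_in_map => i; rewrite -[_ :: _]/(iota 0 n.+1) mem_iota => /andP[_ lt_in].
by rewrite nth_Ds.
Qed.

Lemma D0 : D q 0 = vword F [::]. Proof. by []. Qed.

Definition embed_seq (u : nat -> V F) : pseries qshuffle := fun n => embed (u n).

Definition Dser := embed_seq (D q).

Lemma Dser_mul_Gser : Dser * Gser lx = 1.
Proof.
apply: funext => -[|n]; rewrite coef_mul pseries1E.
  by rewrite big_nat1 Gser0 mulr1 /Dser /embed_seq D0 embed_word.
rewrite big_nat_recr //= subnn Gser0 mulr1 /Dser /embed_seq D_succ.
rewrite embed_scale embed_sum scaleN1r.
rewrite [X in _ - X](eq_bigr (fun i => embed (D q i) * Gser lx (n.+1 - i)%N)).
  by rewrite /index_iota subn0 subrr.
by move=> i _; rewrite embed_star embed_word.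
Qed.

Lemma Gser_expansion_q2 :
  Gser ly = rescale (q ^+ 2) Dser + q ^+ 2 *: (tX * (Wser lx * Dser * Wser ly)).
Proof.
apply: (pseries_decomposition (Gser0 lx) Dser_mul_Gser).
  exact: Gser_Gser.
exact: Gser_Wser_comm.
Qed.

Lemma Gser_expansion_qV2 :
  Gser ly = rescale (q ^- 2) Dser + tX * (Wser ly * Dser * Wser lx).
Proof.
rewrite -[tX * _]scale1r; apply: (pseries_decomposition (Gser0 lx) Dser_mul_Gser).
  by rewrite scale1r; exact: Gser_GserV.
exact: Gser_Wser_commV.
Qed.

Lemma embed_triple_sum n f : embed (triple_sum n f) =
  \sum_(0 <= i < n.+1) \sum_(0 <= j < n.+1) \sum_(0 <= k < n.+1)
    (if (i + j + k).+1 == n then embed (f i j k) else 0).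
Proof.
rewrite /triple_sum embed_sum; apply: eq_bigr => i _; rewrite embed_sum.
apply: eq_bigr => j _; rewrite embed_sum; apply: eq_bigr => k _.
by case: ifP; rewrite ?embed_nil.
Qed.

Lemma embed_triple_sum_rev n f :
  embed (triple_sum n f) = embed (triple_sum n (fun i j k => f k j i)).
Proof.
rewrite !embed_triple_sum exchange_big /=.
under eq_bigr do rewrite exchange_big /=.
rewrite exchange_big /=; apply: eq_bigr => i _; apply: eq_bigr => j _.
by apply: eq_bigr => k _; rewrite addnC (addnC k) addnA.
Qed.

Lemma embed_triple_sum_star n (u v w : nat -> V F) :
  embed (triple_sum n (fun i j k => star q (star q (u i) (v j)) (w k))) =
  (tX * (embed_seq u * embed_seq v * embed_seq w)) n.
Proof.
rewrite embed_triple_sum coef_tX_mul3; apply: eq_bigr => i _; apply: eq_bigr => j _.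
by apply: eq_bigr => k _; rewrite !embed_star.
Qed.

Lemma embed_Gw n : embed (Gw F n) = Gser ly n. Proof. exact: embed_word. Qed.

Lemma embed_Wneg : embed_seq (Wneg F) = Wser lx.
Proof. by apply: funext => k; rewrite /embed_seq embed_word. Qed.

Lemma embed_Wpos : embed_seq (Wpos F) = Wser ly.
Proof. by apply: funext => k; rewrite /embed_seq embed_word. Qed.
End QShuffleAlgebra.

Theorem theorem9p15 (F : fieldType) (q : F) (hq0 : q != 0)
    (hq : forall m : nat, (0 < m)%N -> q ^+ m != 1) (n : nat) :
  veq (Gw F n)
      (vadd (vscale (q ^ (2 * n%:Z)) (D q n))
            (vscale (q ^+ 2) (triple_sum n (fun i j k =>
               star q (star q (Wneg F i) (D q j)) (Wpos F k)))))
  /\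
  veq (Gw F n)
      (vadd (vscale (q ^ (- (2 * n%:Z))) (D q n))
            (triple_sum n (fun i j k =>
               star q (star q (Wpos F k) (D q j)) (Wneg F i)))).
Proof.
have q2n : q ^ (2 * n%:Z) = (q ^+ 2) ^+ n by rewrite -PoszM -exprnP exprM.
have qV2n : q ^ (- (2 * n%:Z)) = (q ^- 2) ^+ n by rewrite -PoszM -exprnN exprVn -exprM.
split; apply: veq_embed; rewrite embed_add !embed_scale embed_Gw.
  rewrite embed_triple_sum_star embed_Wneg embed_Wpos -/(Dser q).
  by rewrite {1}(Gser_expansion_q2 hq0) pseriesDE pseriesZE rescaleE q2n.
rewrite embed_triple_sum_rev embed_triple_sum_star embed_Wneg embed_Wpos -/(Dser q).
by rewrite {1}(Gser_expansion_qV2 hq0) pseriesDE rescaleE qV2n.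
Qed.
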